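(* For all real numbers $t,s$, $$\lim_{k\to\infty} C_k\, k^t\, \eta_k^{2k+s} = 0.$$
   Context: For integers $k\ge 2$, $C_k:=\frac{(2k-2)!}{(k-1)!}$. Define the polynomials $p_k(z)=1-2z-(7+8k)z^2$, $h_k(z)=1-z-C_k z^{2k+1}$, and $\Delta_k(z)=p_k(z)+4z^{2k+1}C_k h_k(z)$. $\eta_k$ denotes the unique real root of $\Delta_k$ in the open interval $\left(0,\frac{1}{\sqrt{8+8k}}\right)$. *)

From Stdlib Require Import Reals ClassicalEpsilon Arith Factorial.
From Coquelicot Require Import Coquelicot.
Open Scope R_scope.

Definition Ck (k : nat) : R := INR (Factorial.fact (2 * k - 2)) / INR (Factorial.fact (k - 1)).

Definition pk (k : nat) (z : R) : R := 1 - 2 * z - (7 + 8 * INR k) * z ^ 2.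
Definition hk (k : nat) (z : R) : R := 1 - z - Ck k * z ^ (2 * k + 1).
Definition Deltak (k : nat) (z : R) : R :=
  pk k z + 4 * z ^ (2 * k + 1) * Ck k * hk k z.

Definition is_eta (k : nat) (x : R) : Prop :=
  0 < x /\ x < 1 / sqrt (8 + 8 * INR k) /\ Deltak k x = 0.

Definition eta (k : nat) : R := epsilon (inhabits 0) (is_eta k).

(* For 0 <= x <= 1/sqrt(8+8k) the crude bound C_k <= (2k)^k gives C_k x^(2k) <= 4^(-k), so
   the correction term 4 x^(2k+1) C_k h_k(x) of Delta_k is tiny: Delta_k > 0 on
   [0, 1/(9+8k)] and Delta_k < 0 at 1/sqrt(8+8k).  So for k >= 2 the intermediate value
   theorem provides a root and eta_k lies in (1/(9+8k), 1/sqrt(8+8k)).  Then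
   C_k eta_k^(2k) <= 4^(-k) while k^t eta_k^s <= (9+8k)^(|t|+|s|), and a polynomial times a
   geometric sequence tends to 0. *)
From Stdlib Require Import Reals Lra Lia Psatz ClassicalEpsilon Factorial.
From Coquelicot Require Import Coquelicot.
Open Scope R_scope.

Lemma fact_add_le (m n : nat) : (fact (m + n) <= fact m * (m + n) ^ n)%nat.
Proof.
  induction n as [|n IH].
  - rewrite Nat.add_0_r; simpl; lia.
  - rewrite Nat.add_succ_r, Nat.pow_succ_r'; change (fact (S ?j)) with (S j * fact j)%nat.
    assert (Hpow : ((m + n) ^ n <= S (m + n) ^ n)%nat) by (apply Nat.pow_le_mono_l; lia).
    apply Nat.le_trans with (S (m + n) * (fact m * (m + n) ^ n))%nat.
    + now apply Nat.mul_le_mono_l.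
    + replace (fact m * (S (m + n) * S (m + n) ^ n))%nat
        with (S (m + n) * (fact m * S (m + n) ^ n))%nat by ring.
      now apply Nat.mul_le_mono_l, Nat.mul_le_mono_l.
Qed.

Lemma Ck_pos (k : nat) : 0 < Ck k.
Proof. apply Rdiv_lt_0_compat; apply lt_0_INR, lt_O_fact. Qed.

Lemma Ck_le_pow (k : nat) : (1 <= k)%nat -> Ck k <= (2 * INR k) ^ k.
Proof.
  intros Hk.
  assert (Hfact : (fact (2 * k - 2) <= fact (k - 1) * (2 * k) ^ k)%nat).
  { replace (2 * k - 2)%nat with (k - 1 + (k - 1))%nat by lia.
    apply Nat.le_trans with (1 := fact_add_le _ _), Nat.mul_le_mono_l.
    apply Nat.le_trans with ((2 * k) ^ (k - 1))%nat.
    - apply Nat.pow_le_mono_l; lia.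
    - apply Nat.pow_le_mono_r; lia. }
  apply le_INR in Hfact. rewrite mult_INR, pow_INR, mult_INR in Hfact.
  change (INR 2) with 2 in Hfact.
  pose proof (lt_0_INR _ (lt_O_fact (k - 1))).
  unfold Ck. apply Rle_div_l; lra.
Qed.

Lemma Ck_mul_pow_le (k : nat) (x : R) :
  (1 <= k)%nat -> x ^ 2 <= 1 / (8 + 8 * INR k) -> Ck k * x ^ (2 * k) <= (/ 4) ^ k.
Proof.
  intros Hk Hx.
  assert (HK : 1 <= INR k) by (apply (le_INR 1); lia).
  rewrite pow_mult.
  apply Rle_trans with ((2 * INR k) ^ k * (1 / (8 + 8 * INR k)) ^ k).
  - apply Rmult_le_compat.
    + apply Rlt_le, Ck_pos.
    + apply pow_le, pow2_ge_0.
    + now apply Ck_le_pow.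
    + apply pow_incr. split; [apply pow2_ge_0 | exact Hx].
  - rewrite <- Rpow_mult_distr. apply pow_incr. split.
    + apply Rmult_le_pos; [lra|]. apply Rlt_le, Rdiv_lt_0_compat; lra.
    + unfold Rdiv. rewrite Rmult_1_l. apply Rmult_le_reg_r with (8 + 8 * INR k); [lra|].
      rewrite Rmult_assoc, Rinv_l by lra. lra.
Qed.

Lemma quarter_pow_le (k : nat) : (2 <= k)%nat -> (/ 4) ^ k <= / 16.
Proof.
  intros Hk. replace k with (2 + (k - 2))%nat by lia. rewrite pow_add.
  assert (0 <= (/ 4) ^ (k - 2) <= 1).
  { split; [apply pow_le; lra |]. rewrite <- (pow1 (k - 2)). apply pow_incr; lra. }
  simpl. nra.
Qed.

Lemma Ck_mul_pow_bounds (k : nat) (x : R) :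
  (2 <= k)%nat -> x ^ 2 <= 1 / (8 + 8 * INR k) ->
  0 <= Ck k * x ^ (2 * k) <= / 16.
Proof.
  intros Hk Hx. split.
  - apply Rmult_le_pos; [apply Rlt_le, Ck_pos |].
    rewrite pow_mult. apply pow_le, pow2_ge_0.
  - apply Rle_trans with ((/ 4) ^ k).
    + apply Ck_mul_pow_le; [lia | exact Hx].
    + now apply quarter_pow_le.
Qed.

Lemma Deltak_eq (k : nat) (x : R) :
  Deltak k x = pk k x + 4 * x * (Ck k * x ^ (2 * k)) * (1 - x - Ck k * x ^ (2 * k) * x).
Proof. unfold Deltak, hk. rewrite pow_add, pow_1. ring. Qed.

Lemma Deltak_continuous (k : nat) : continuity (Deltak k).
Proof. apply derivable_continuous. unfold Deltak, pk, hk. reg. Qed.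

Lemma pow2_inv_sqrt (a : R) : 0 < a -> (1 / sqrt a) ^ 2 = 1 / a.
Proof.
  intros Ha. unfold Rdiv. rewrite !Rmult_1_l, pow_inv, pow2_sqrt; lra.
Qed.

Lemma Deltak_inv_sqrt_neg (k : nat) :
  (2 <= k)%nat -> Deltak k (1 / sqrt (8 + 8 * INR k)) < 0.
Proof.
  intros Hk. set (r := 1 / sqrt (8 + 8 * INR k)).
  assert (HK : 2 <= INR k) by (apply (le_INR 2); lia).
  assert (Hr : 0 < r) by (apply Rdiv_lt_0_compat, sqrt_lt_R0; lra).
  assert (Hr2 : r ^ 2 = 1 / (8 + 8 * INR k)) by (apply pow2_inv_sqrt; lra).
  assert (Hr1 : r < 1).
  { assert (r ^ 2 < 1) by (rewrite Hr2; apply Rlt_div_l; lra). nra. }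
  assert (Hp : pk k r = r ^ 2 - 2 * r).
  { unfold pk. replace ((7 + 8 * INR k) * r ^ 2) with (1 - r ^ 2); [ring |].
    rewrite Hr2. field. lra. }
  destruct (Ck_mul_pow_bounds k r Hk ltac:(lra)) as [B0 B1].
  rewrite Deltak_eq, Hp. set (B := Ck k * r ^ (2 * k)) in *. simpl. nra.
Qed.

Lemma Deltak_pos (k : nat) (x : R) :
  (2 <= k)%nat -> 0 <= x <= 1 / (9 + 8 * INR k) -> 0 < Deltak k x.
Proof.
  intros Hk [Hx0 Hx].
  assert (HK : 2 <= INR k) by (apply (le_INR 2); lia).
  assert (Hxm : x * (9 + 8 * INR k) <= 1) by (rewrite <- Rle_div_r in Hx; lra).
  assert (Hx2 : x ^ 2 <= 1 / (8 + 8 * INR k)).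
  { rewrite <- Rle_div_r by lra. simpl. nra. }
  destruct (Ck_mul_pow_bounds k x Hk Hx2) as [B0 B1].
  rewrite Deltak_eq. unfold pk. set (B := Ck k * x ^ (2 * k)) in *. simpl.
  assert (0 <= 4 * x * B * (1 - x - B * x)) by (apply Rmult_le_pos; nra).
  nra.
Qed.

Lemma is_eta_exists (k : nat) : (2 <= k)%nat -> exists x, is_eta k x.
Proof.
  intros Hk. set (r := 1 / sqrt (8 + 8 * INR k)).
  assert (HK : 2 <= INR k) by (apply (le_INR 2); lia).
  assert (Hr : 0 < r) by (apply Rdiv_lt_0_compat, sqrt_lt_R0; lra).
  assert (H0 : 0 < Deltak k 0).
  { apply Deltak_pos; [exact Hk |]. split; [lra |]. apply Rlt_le, Rdiv_lt_0_compat; lra. }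
  pose proof (Deltak_inv_sqrt_neg k Hk) as Hneg. fold r in Hneg.
  destruct (IVT (fun x => - Deltak k x) 0 r (continuity_opp _ (Deltak_continuous k)) Hr)
    as [x [[Hx0 Hxr] Hx]]; simpl; [lra | lra |].
  exists x. split; [| split].
  - destruct Hx0 as [Hlt | Heq]; [exact Hlt | subst x; lra].
  - destruct Hxr as [Hlt | Heq]; [exact Hlt | subst x; lra].
  - lra.
Qed.

Lemma eta_spec (k : nat) : (2 <= k)%nat -> is_eta k (eta k).
Proof. intros Hk. unfold eta. apply epsilon_spec, is_eta_exists, Hk. Qed.

Lemma eta_sqr_le (k : nat) : (2 <= k)%nat -> eta k ^ 2 <= 1 / (8 + 8 * INR k).
Proof.
  intros Hk. destruct (eta_spec k Hk) as [H0 [H1 _]].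
  rewrite <- pow2_inv_sqrt by (pose proof (pos_INR k); lra).
  apply pow_incr; lra.
Qed.

Lemma eta_gt (k : nat) : (2 <= k)%nat -> 1 / (9 + 8 * INR k) < eta k.
Proof.
  intros Hk. destruct (eta_spec k Hk) as [H0 [_ H2]].
  destruct (Rlt_or_le (1 / (9 + 8 * INR k)) (eta k)) as [Hlt | Hle]; [exact Hlt |].
  pose proof (Deltak_pos k (eta k) Hk (conj (Rlt_le _ _ H0) Hle)). lra.
Qed.

Lemma Rpower_le_Rpower_Rabs (x M a : R) :
  1 <= M -> / M <= x <= M -> Rpower x a <= Rpower M (Rabs a).
Proof.
  intros HM [Hl Hu].
  assert (HiM : 0 < / M) by (apply Rinv_0_lt_compat; lra).
  assert (Hln : Rabs (ln x) <= ln M).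
  { apply Rabs_le. split.
    - rewrite <- ln_Rinv by lra. apply ln_le; lra.
    - apply ln_le; lra. }
  assert (Hexp : a * ln x <= Rabs a * ln M).
  { apply Rle_trans with (Rabs (a * ln x)); [apply Rle_abs |].
    rewrite Rabs_mult. apply Rmult_le_compat_l; [apply Rabs_pos | exact Hln]. }
  unfold Rpower. destruct Hexp as [Hlt | Heq].
  - now apply Rlt_le, exp_increasing.
  - rewrite Heq. apply Rle_refl.
Qed.

Lemma is_lim_seq_affine_ratio (a b : R) :
  0 < a -> 0 < b -> is_lim_seq (fun n => (a + b * INR (S n)) / (a + b * INR n)) 1.
Proof.
  intros Ha Hb.
  assert (Hinf : is_lim_seq (fun n => a / b + INR n) p_infty).
  { apply is_lim_seq_le_p_loc with INR; [| exact is_lim_seq_INR].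
    exists 0%nat. intros n _. pose proof (Rdiv_lt_0_compat a b Ha Hb). lra. }
  pose proof (is_lim_seq_inv _ _ Hinf ltac:(discriminate)) as Hinv. simpl in Hinv.
  pose proof (is_lim_seq_plus' _ _ 1 0 (is_lim_seq_const 1) Hinv) as Hsum.
  rewrite Rplus_0_r in Hsum.
  apply is_lim_seq_ext with (2 := Hsum). intros n. rewrite S_INR.
  pose proof (pos_INR n). pose proof (Rdiv_lt_0_compat a b Ha Hb).
  field. repeat split; nra.
Qed.

Lemma is_lim_seq_affine_pow_mul_geom (a b q : R) (N : nat) :
  0 < a -> 0 < b -> 0 < q < 1 -> is_lim_seq (fun n => (a + b * INR n) ^ N * q ^ n) 0.
Proof.
  intros Ha Hb Hq. set (u n := (a + b * INR n) ^ N * q ^ n).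
  assert (Hu : forall n, 0 < u n).
  { intros n. pose proof (pos_INR n).
    apply Rmult_lt_0_compat; apply pow_lt; nra. }
  apply is_lim_seq_abs_0, ex_series_lim_0.
  apply ex_series_DAlembert with q; [lra | intros n; specialize (Hu n); lra |].
  assert (Hratio := is_lim_seq_continuous (fun r => r ^ N * q) _ _
                      ltac:(reg) (is_lim_seq_affine_ratio a b Ha Hb)).
  cbv beta in Hratio. rewrite pow1, Rmult_1_l in Hratio.
  apply is_lim_seq_ext with (2 := Hratio). intros n.
  rewrite Rabs_pos_eq by (apply Rlt_le, Rdiv_lt_0_compat; apply Hu).
  unfold u. pose proof (pos_INR n). assert (0 < a + b * INR n) by nra.
  assert (0 < a + b * INR (S n)) by (rewrite S_INR; nra).
  unfold Rdiv. rewrite <- tech_pow_Rmult, Rpow_mult_distr, pow_inv.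
  field. split; apply pow_nonzero; nra.
Qed.

Lemma Ck_Rpower_eta_bounds (t s : R) (N k : nat) :
  (2 <= k)%nat -> Rabs t + Rabs s <= INR N ->
  0 <= Ck k * Rpower (INR k) t * Rpower (eta k) (2 * INR k + s)
    <= (9 + 8 * INR k) ^ N * (/ 4) ^ k.
Proof.
  intros Hk HN.
  assert (HK : 2 <= INR k) by (apply (le_INR 2); lia).
  destruct (eta_spec k Hk) as [Hx0 _].
  pose proof (eta_gt k Hk) as Hxl. pose proof (eta_sqr_le k Hk) as Hx2.
  set (x := eta k) in *. set (M := 9 + 8 * INR k) in *.
  assert (HiM : / M = 1 / M) by (unfold Rdiv; ring).
  assert (Hxu : x <= M).
  { assert (1 / (8 + 8 * INR k) <= 1) by (apply Rle_div_l; lra). unfold M. nra. }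
  assert (Hsplit : Rpower x (2 * INR k + s) = x ^ (2 * k) * Rpower x s).
  { rewrite Rpower_plus, <- Rpower_pow, mult_INR by exact Hx0. reflexivity. }
  assert (Ht : Rpower (INR k) t <= Rpower M (Rabs t)).
  { apply Rpower_le_Rpower_Rabs; [unfold M; lra |].
    split; [| unfold M; lra]. rewrite HiM. apply Rle_div_l; unfold M; nra. }
  assert (Hs : Rpower x s <= Rpower M (Rabs s)).
  { apply Rpower_le_Rpower_Rabs; [unfold M; lra | split; lra]. }
  assert (HMN : Rpower M (Rabs t) * Rpower M (Rabs s) <= M ^ N).
  { rewrite <- Rpower_plus, <- Rpower_pow by (unfold M; lra).
    apply Rle_Rpower; [unfold M; lra | exact HN]. }
  destruct (Ck_mul_pow_bounds k x Hk Hx2) as [B0 _].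
  pose proof (Ck_mul_pow_le k x ltac:(lia) Hx2) as B1.
  assert (Pt : 0 < Rpower (INR k) t) by apply exp_pos.
  assert (Ps : 0 < Rpower x s) by apply exp_pos.
  rewrite Hsplit.
  replace (Ck k * Rpower (INR k) t * (x ^ (2 * k) * Rpower x s))
    with ((Ck k * x ^ (2 * k)) * (Rpower (INR k) t * Rpower x s)) by ring.
  split.
  - apply Rmult_le_pos; [exact B0 | nra].
  - rewrite Rmult_comm. apply Rmult_le_compat; [nra | exact B0 | | exact B1].
    apply Rle_trans with (2 := HMN). apply Rmult_le_compat; lra.
Qed.

Theorem lemma2 (t s : R) :
  is_lim_seq
    (fun k : nat => Ck k * Rpower (INR k) t * Rpower (eta k) (2 * INR k + s))
    0.
Proof.
  destruct (INR_unbounded (Rabs t + Rabs s)) as [N HN].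
  apply is_lim_seq_le_le_loc with (u := fun _ => 0)
    (w := fun k => (9 + 8 * INR k) ^ N * (/ 4) ^ k).
  - exists 2%nat. intros k Hk. apply Ck_Rpower_eta_bounds; [exact Hk | lra].
  - apply is_lim_seq_const.
  - apply is_lim_seq_affine_pow_mul_geom; lra.
Qed.
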